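(* If $G\in\mathbb{G}_\pi$ and $S\in st(G)$, then $\mathcal{R}_S(G)\in\mathbb{G}_\pi$. In particular, no loop of $G$ and no loop of any reduction of $G$ can have weight $\lambda$.
   Context: Let $\mathbb{W}$ be the field of rational functions $p(\lambda)/q(\lambda)$ in a complex variable $\lambda$ with $p,q\in\mathbb{C}[\lambda]$, $q\neq 0$. For $w=p/q\in\mathbb{W}$ let $\pi(w)=\deg p-\deg q$ (the zero function is regarded as satisfying $\pi\le 0$). A graph $G=(V,E,\omega)$ is a finite directed graph with vertex set $V=\{v_1,\dots,v_n\}$, edge set $E$ (loops allowed, at most one edge $e_{ij}$ from $v_i$ to $v_j$) and weights $\omega:E\to\mathbb{W}\setminus\{0\}$, with $\omega(e_{ij})=0$ if there is no such edge; $M(G)_{ij}=\omega(e_{ij})$. $\mathbb{G}_\pi$ is the set of graphs $G$ with $\pi(M(G)_{ij})\le 0$ for every entry. $\bar S=V\setminus S$; $\ell(G)$ is $G$ with loops removed; $G|_U$ is the induced subgraph. A path is a sequence of distinct vertices $u_1,\dots,u_m$ ($m\ge2$) with edges $u_k\to u_{k+1}$; a cycle is such a sequence with $u_1=u_m$ and $u_1,\dots,u_{m-1}$ distinct; $u_2,\dots,u_{m-1}$ are interior vertices. A nonempty $S\subseteq V$ is a structural set ($S\in st(G)$) if $\ell(G)|_{\bar S}$ has no cycles and $\omega(e_{ii})\neq\lambda$ for all $v_i\in\bar S$. For $v_i,v_j\in S$, $\mathcal{B}_{ij}(G;S)$ is the set of paths or cycles from $v_i$ to $v_j$ with no interior vertex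 in $S$; for $\beta=u_1,\dots,u_m$, $\mathcal{P}_\omega(\beta)=\omega(u_1u_2)\prod_{k=2}^{m-1}\frac{\omega(u_ku_{k+1})}{\lambda-\omega(u_ku_k)}$. The reduction $\mathcal{R}_S(G)$ has vertex set $S$, an edge $v_i\to v_j$ iff $\mathcal{B}_{ij}(G;S)\ne\emptyset$, with weight $\sum_{\beta\in\mathcal{B}_{ij}(G;S)}\mathcal{P}_\omega(\beta)$. A reduction of $G$ means a graph obtained from $G$ by a finite sequence of such reductions (each over a structural set of the current graph). *)

From HB Require Import structures.
From mathcomp Require Import all_boot all_order all_algebra.
From mathcomp Require Import reals complex.
Set Implicit Arguments. Unset Strict Implicit. Unset Printing Implicit Defensive.
Import Order.TTheory GRing.Theory Num.Theory.
Local Open Scope ring_scope.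

Definition Cplx (R : realType) : fieldType := R[i].

Definition W (R : realType) : fieldType := {fraction {poly Cplx R}}.

Definition tof (R : realType) (p : {poly Cplx R}) : W R := @FracField.tofrac _ p.

Definition lam (R : realType) : W R := tof 'X.

(* pi(w) <= 0 : w = p/q with q <> 0 and deg p <= deg q (deg p - deg q does not
   depend on the representation; the zero function satisfies it). *)
Definition pi_le0 (R : realType) (w : W R) : Prop :=
  exists p q : {poly Cplx R}, q != 0 /\ w = tof p / tof q /\ (size p <= size q)%N.

(* A graph on vertices 'I_n is given by its weight matrix M(G):
   M i j = weight of edge v_i -> v_j, or 0 if there is no such edge. *)
Definition edge (R : realType) (n : nat) (M : 'M[W R]_n) : rel 'I_n :=
  fun a b => M a b != 0.

Definition in_Gpi (R : realType) (n : nat) (M : 'M[W R]_n) : Prop :=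
  forall i j, pi_le0 (M i j).

Definition structural (R : realType) (n : nat) (M : 'M[W R]_n) (S : {set 'I_n}) : Prop :=
  [/\ S != set0,
      (* ell(G)|_{S-bar} has no cycles (cycles of ell(G) have >= 2 distinct vertices) *)
      (forall s : seq 'I_n, (2 <= size s)%N -> uniq s -> all (fun v => v \in ~: S) s ->
          ~~ cycle (edge M) s)
    & (forall i, i \in ~: S -> M i i != lam R)].

(* P_omega of the path/cycle i, s_1, ..., s_k, j (s = interior vertices) *)
Fixpoint pathw (R : realType) (n : nat) (M : 'M[W R]_n) (i : 'I_n) (s : seq 'I_n) (j : 'I_n) : W R :=
  match s with
  | [::] => M i j
  | x :: s' => M i x * (pathw M x s' j / (lam R - M x x))
  end.

(* The interior-vertex list t describes an element of B_ij(G;S) *)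
Definition in_B (R : realType) (n : nat) (M : 'M[W R]_n) (S : {set 'I_n})
    (i : 'I_n) (s : seq 'I_n) (j : 'I_n) : bool :=
  [&& uniq s, all (fun v => v \in ~: S) s & path (edge M) i (rcons s j)].

(* weight of v_i -> v_j in R_S(G) : sum over B_ij(G;S) (interior lists of
   distinct vertices have length at most n) *)
Definition redw (R : realType) (n : nat) (M : 'M[W R]_n) (S : {set 'I_n}) (i j : 'I_n) : W R :=
  \sum_(k < n.+1) \sum_(t : k.-tuple 'I_n | in_B M S i t j) pathw M i t j.

Definition reduce (R : realType) (n : nat) (M : 'M[W R]_n) (S : {set 'I_n}) : 'M[W R]_#|S| :=
  \matrix_(a, b) redw M S (enum_val a) (enum_val b).

Inductive is_reduction (R : realType) (n : nat) (M : 'M[W R]_n) : forall m, 'M[W R]_m -> Prop :=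
  | red_one (S : {set 'I_n}) : structural M S -> is_reduction M (reduce M S)
  | red_step m (M' : 'M[W R]_m) (S : {set 'I_m}) :
      is_reduction M M' -> structural M' S -> is_reduction M (reduce M' S).

From HB Require Import structures.
From mathcomp Require Import all_boot all_order all_algebra.
From mathcomp Require Import reals complex.
Set Implicit Arguments. Unset Strict Implicit. Unset Printing Implicit Defensive.
Import Order.TTheory GRing.Theory Num.Theory.
Local Open Scope ring_scope.

(* Weights w with pi(w) <= 0 are closed under sums and products, and the
   factor 1 / (lambda - w) has pi = -1, so every path weight P_omega and hence
   every reduced weight again has pi <= 0.  Since pi(lambda) = 1, no such
   weight, in particular no loop weight, equals lambda. *)

Section DegreeBound.
Variable R : realType.

Lemma pi_le0_0 : pi_le0 (0 : W R).
Proof.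
exists 0, 1; split; first exact: oner_neq0.
split; last exact: leq_trans (eq_leq (size_poly0 _)) (leq0n _).
by rewrite /tof tofrac0 mul0r.
Qed.

Lemma pi_le0D (a b : W R) : pi_le0 a -> pi_le0 b -> pi_le0 (a + b).
Proof.
move=> [p1 [q1 [q1n [-> s1]]]] [p2 [q2 [q2n [-> s2]]]].
exists (p1 * q2 + p2 * q1), (q1 * q2); split; first by rewrite mulf_neq0.
split; first by rewrite addf_div ?tofrac_eq0 // /tof rmorphD !rmorphM.
rewrite (size_mul q1n q2n) -subn1; apply: (leq_trans (size_polyD _ _)).
rewrite geq_max; apply/andP; split; apply: (leq_trans (size_polyMleq _ _)).
  by rewrite -subn1 leq_sub2r // leq_add2r.
by rewrite -subn1 addnC leq_sub2r // leq_add2l.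
Qed.

Lemma pi_le0M (a b : W R) : pi_le0 a -> pi_le0 b -> pi_le0 (a * b).
Proof.
move=> [p1 [q1 [q1n [-> s1]]]] [p2 [q2 [q2n [-> s2]]]].
exists (p1 * p2), (q1 * q2); split; first by rewrite mulf_neq0.
split; first by rewrite mulf_div /tof !rmorphM.
rewrite (size_mul q1n q2n); apply: (leq_trans (size_polyMleq _ _)).
by rewrite -!subn1 leq_sub2r // leq_add.
Qed.

(* If a = p/q then 1/(lambda - a) = q/(X q - p), and X q dominates p. *)
Lemma pi_le0_invBlam (a : W R) : pi_le0 a -> pi_le0 ((lam R - a)^-1).
Proof.
move=> [p [q [qn [-> s]]]].
have size_den : size ('X * q - p) = (size q).+1.
  rewrite mulrC size_polyDl (size_mulX qn) //.
  by rewrite size_polyN ltnS.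
exists q, ('X * q - p); split; first by rewrite -size_poly_eq0 size_den.
split; last by rewrite size_den.
have tofq_neq0 : tof q != 0 by rewrite tofrac_eq0.
by rewrite /lam -[tof 'X](mulfK tofq_neq0) -mulrBl invf_div /tof rmorphB rmorphM.
Qed.

Lemma pi_le0_neq_lam (a : W R) : pi_le0 a -> a != lam R.
Proof.
move=> [p [q [qn [-> s]]]]; apply/eqP => a_lam.
have tofq_neq0 : tof q != 0 by rewrite tofrac_eq0.
have : tof p = lam R * tof q by rewrite -a_lam mulfVK.
rewrite /lam /tof -rmorphM => /eqP; rewrite tofrac_eq => /eqP p_Xq.
by move: s; rewrite p_Xq mulrC (size_mulX qn) ltnn.
Qed.

Variable n : nat.
Implicit Types (M : 'M[W R]_n) (S : {set 'I_n}).

Lemma pathw_pi_le0 M s i j : in_Gpi M -> pi_le0 (pathw M i s j).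
Proof.
move=> HM; elim: s i => [|x s IHs] i /=; first exact: HM.
by apply: pi_le0M; [exact: HM | apply: pi_le0M; [exact: IHs | exact: pi_le0_invBlam]].
Qed.

Lemma sum_pi_le0 (I : Type) (r : seq I) (P : pred I) (F : I -> W R) :
  (forall i, P i -> pi_le0 (F i)) -> pi_le0 (\sum_(i <- r | P i) F i).
Proof. exact: (big_ind _ pi_le0_0 pi_le0D). Qed.

Lemma reduce_in_Gpi M S : in_Gpi M -> in_Gpi (reduce M S).
Proof.
move=> HM a b; rewrite mxE.
by do 2 apply: sum_pi_le0 => ? _; exact: pathw_pi_le0.
Qed.

End DegreeBound.

Lemma reduction_in_Gpi (R : realType) n (M : 'M[W R]_n) m (M' : 'M[W R]_m) :
  in_Gpi M -> is_reduction M M' -> in_Gpi M'.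
Proof.
by move=> HM; elim=> *; exact: reduce_in_Gpi.
Qed.

Theorem lemma1 (R : realType) (n : nat) (M : 'M[W R]_n) :
  in_Gpi M ->
  (forall S : {set 'I_n}, structural M S -> in_Gpi (reduce M S)) /\
  (forall i, M i i != lam R) /\
  (forall m (M' : 'M[W R]_m), is_reduction M M' -> forall i, M' i i != lam R).
Proof.
move=> HM; split; first by move=> S _; exact: reduce_in_Gpi.
split; first by move=> i; exact: pi_le0_neq_lam.
by move=> m M' redM' i; exact: pi_le0_neq_lam (reduction_in_Gpi HM redM' i i).
Qed.
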